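(* Let $(X,\widetilde{\tau},\mathfrak{a}_E,E)$ be a soft aura topological space. Then the soft aura-closure operator $\mathrm{cl}_{\mathfrak{a}}$ satisfies, for all $(G,E),(H,E)\in\mathrm{SS}(X,E)$: (i) (Grounding) $\mathrm{cl}_{\mathfrak{a}}(\widetilde{\Phi})=\widetilde{\Phi}$; (ii) (Enlargement) $(G,E)\sqsubseteq \mathrm{cl}_{\mathfrak{a}}(G,E)$; (iii) (Monotonicity) if $(G,E)\sqsubseteq(H,E)$ then $\mathrm{cl}_{\mathfrak{a}}(G,E)\sqsubseteq\mathrm{cl}_{\mathfrak{a}}(H,E)$; (iv) (Soft additivity) $\mathrm{cl}_{\mathfrak{a}}((G,E)\sqcup(H,E))=\mathrm{cl}_{\mathfrak{a}}(G,E)\sqcup\mathrm{cl}_{\mathfrak{a}}(H,E)$. Hence $\mathrm{cl}_{\mathfrak{a}}$ is a soft additive Čech closure operator (an operator on $\mathrm{SS}(X,E)$ satisfying (i)–(iv)).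
   Context: Let $X$ be a nonempty set and $E$ a nonempty parameter set. A soft set over $X$ is a map $F:E\to\mathcal{P}(X)$, written $(F,E)$; $\mathrm{SS}(X,E)$ denotes the family of all soft sets. Operations are parameterwise: $(F,E)\sqsubseteq(G,E)$ iff $F(e)\subseteq G(e)$ for all $e\in E$; soft union $\sqcup$ and soft intersection $\sqcap$ are pointwise union/intersection; the complement is $(F,E)^c(e)=X\setminus F(e)$. The null soft set $\widetilde{\Phi}$ has all values $\emptyset$; the absolute soft set $\widetilde{X}$ has all values $X$. A soft topology $\widetilde{\tau}$ is a subfamily of $\mathrm{SS}(X,E)$ containing $\widetilde{\Phi},\widetilde{X}$ and closed under arbitrary soft unions and finite soft intersections. A soft scope function is a map $\mathfrak{a}_E:X\to\widetilde{\tau}$ with $x\in\mathfrak{a}_E(x)(e)$ for every $x\in X$, $e\in E$; then $(X,\widetilde{\tau},\mathfrak{a}_E,E)$ is a soft aura topological space. The soft aura-closure is $\mathrm{cl}_{\mathfrak{a}}(G,E)=(H,E)$ with $H(e)=\{x\in X:\mathfrak{a}_E(x)(e)\cap G(e)\neq\emptyset\}$. *)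

Set Implicit Arguments.

Definition soft_set (X E : Type) := E -> X -> Prop.

Definition soft_subset {X E : Type} (F G : soft_set X E) : Prop :=
  forall e x, F e x -> G e x.

Definition soft_eq {X E : Type} (F G : soft_set X E) : Prop :=
  forall e x, F e x <-> G e x.

Definition soft_union {X E : Type} (F G : soft_set X E) : soft_set X E :=
  fun e x => F e x \/ G e x.

Definition soft_inter {X E : Type} (F G : soft_set X E) : soft_set X E :=
  fun e x => F e x /\ G e x.

Definition soft_null {X E : Type} : soft_set X E := fun _ _ => False.
Definition soft_absolute {X E : Type} : soft_set X E := fun _ _ => True.

Definition soft_Union {X E : Type} (Fam : soft_set X E -> Prop) : soft_set X E :=
  fun e x => exists F, Fam F /\ F e x.

Record soft_topology (X E : Type) (tau : soft_set X E -> Prop) : Prop := {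
  st_null : tau soft_null;
  st_absolute : tau soft_absolute;
  st_union : forall Fam, (forall F, Fam F -> tau F) -> tau (soft_Union Fam);
  st_inter : forall F G, tau F -> tau G -> tau (soft_inter F G)
}.

Definition soft_scope {X E : Type} (tau : soft_set X E -> Prop)
  (a : X -> soft_set X E) : Prop :=
  (forall x, tau (a x)) /\ (forall x e, a x e x).

Definition soft_aura_closure {X E : Type} (a : X -> soft_set X E)
  (G : soft_set X E) : soft_set X E :=
  fun e x => exists y, a x e y /\ G e y.


(** Each property is a statement about the relation [a x e y] alone: grounding,
    monotonicity and additivity hold for any [a] (an existential over [G e y]
    distributes over [\/]), and enlargement needs only [a x e x]. *)

Section AuraClosure.

Variables X E : Type.
Variable a : X -> soft_set X E.

Lemma soft_aura_closure_null : soft_eq (soft_aura_closure a soft_null) soft_null.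
Proof.
  intros e x; split.
  - intros [y [_ Hy]]; exact Hy.
  - intros [].
Qed.

Lemma soft_aura_closure_mono (G H : soft_set X E) :
  soft_subset G H -> soft_subset (soft_aura_closure a G) (soft_aura_closure a H).
Proof.
  intros HGH e x [y [Hay Gy]].
  exists y; split; [exact Hay | apply HGH; exact Gy].
Qed.

Lemma soft_aura_closure_union (G H : soft_set X E) :
  soft_eq (soft_aura_closure a (soft_union G H))
          (soft_union (soft_aura_closure a G) (soft_aura_closure a H)).
Proof.
  intros e x; split.
  - intros [y [Hay [Gy | Hy]]]; [left | right]; exists y; split; assumption.
  - intros [[y [Hay Gy]] | [y [Hay Hy]]]; exists y; split;
      solve [assumption | left; assumption | right; assumption].
Qed.

Hypothesis a_refl : forall x e, a x e x.

Lemma soft_aura_closure_enlarge (G : soft_set X E) :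
  soft_subset G (soft_aura_closure a G).
Proof.
  intros e x Gx.
  exists x; split; [apply a_refl | exact Gx].
Qed.

End AuraClosure.

Theorem theorem3p8 (X E : Type) (x0 : X) (e0 : E)
  (tau : soft_set X E -> Prop) (a : X -> soft_set X E)
  (Htau : soft_topology tau) (Ha : soft_scope tau a) :
  soft_eq (soft_aura_closure a soft_null) soft_null /\
  (forall G : soft_set X E, soft_subset G (soft_aura_closure a G)) /\
  (forall G H : soft_set X E, soft_subset G H ->
     soft_subset (soft_aura_closure a G) (soft_aura_closure a H)) /\
  (forall G H : soft_set X E,
     soft_eq (soft_aura_closure a (soft_union G H))
             (soft_union (soft_aura_closure a G) (soft_aura_closure a H))).
Proof.
  destruct Ha as [_ a_refl].
  split; [| split; [| split]].
  - apply soft_aura_closure_null.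
  - apply soft_aura_closure_enlarge; exact a_refl.
  - apply soft_aura_closure_mono.
  - apply soft_aura_closure_union.
Qed.
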